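(* Let $N\geq 3$, $p>1$, $m\in\mathbb N$ and $\alpha_p:=\max\left\{0,\frac{p(N-2)-(N+2)}{2}\right\}$. For $\alpha>\alpha_p$ let $u_\alpha$ be the unique radial solution of $-\Delta u=|x|^\alpha|u|^{p-1}u$ in $B^N$, $u=0$ on $\partial B^N$, with exactly $m$ nodal sets and $u_\alpha(0)>0$. Then there exists a constant $C>0$, not depending on $\alpha$, such that $$\|u_\alpha\|_\infty\geq C\left(\frac{\alpha+N}{N}\right)^{\frac{2}{p-1}}\quad\forall\alpha>\alpha_p.$$
   Context: $B^N$ is the open unit ball in $\mathbb R^N$ centered at the origin. A nodal set is a connected component of the set where the function does not vanish. *)

From HB Require Import structures.
From mathcomp Require Import all_boot all_order all_algebra.
From mathcomp Require Import all_classical all_reals all_analysis.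
Set Implicit Arguments. Unset Strict Implicit. Unset Printing Implicit Defensive.
Import Order.TTheory GRing.Theory Num.Theory.
Import numFieldNormedType.Exports.
Local Open Scope classical_set_scope.
Local Open Scope ring_scope.

(* Euclidean norm |x| (the library norm on matrices is the max-norm). *)
Definition enorm (R : realType) (N : nat) (x : 'rV[R]_N) : R :=
  Num.sqrt (\sum_(i < N) (x ord0 i) ^+ 2).

Definition ballN (R : realType) (N : nat) : set 'rV[R]_N :=
  [set x | enorm x < 1].
Definition cballN (R : realType) (N : nat) : set 'rV[R]_N :=
  [set x | enorm x <= 1].
Arguments ballN : clear implicits.
Arguments cballN : clear implicits.

Definition evec (R : realType) (N : nat) (i : 'I_N) : 'rV[R]_N := delta_mx 0 i.

Definition pd (R : realType) (N : nat) (i : 'I_N) (u : 'rV[R]_N -> R)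
  : 'rV[R]_N -> R := fun x => 'D_(@evec R N i) u x.
Arguments pd {R N} i u.
Arguments evec {R N} i.

Definition C2_in_ball_C0_closed (R : realType) (N : nat) (u : 'rV[R]_N -> R) : Prop :=
  {within cballN R N, continuous u} /\
  (forall x, ballN R N x ->
     forall i j : 'I_N,
       derivable u x (evec i) /\
       derivable (pd i u) x (evec j) /\
       {for x, continuous u} /\
       {for x, continuous (pd i u)} /\
       {for x, continuous (pd j (pd i u))}).

Definition laplacian (R : realType) (N : nat) (u : 'rV[R]_N -> R) (x : 'rV[R]_N) : R :=
  \sum_(i < N) pd i (pd i u) x.

Definition radial (R : realType) (N : nat) (u : 'rV[R]_N -> R) : Prop :=
  forall x y, cballN R N x -> cballN R N y -> enorm x = enorm y -> u x = u y.

Definition henon_dirichlet_sol (R : realType) (N : nat) (p alpha : R)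
  (u : 'rV[R]_N -> R) : Prop :=
  C2_in_ball_C0_closed u /\
  (forall x, ballN R N x ->
     - laplacian u x = (enorm x) `^ alpha * (`|u x| `^ (p - 1)) * u x) /\
  (forall x, enorm x = 1 -> u x = 0).

Definition nodal_sets (R : realType) (N : nat) (u : 'rV[R]_N -> R)
  : set (set 'rV[R]_N) :=
  let A := [set x | ballN R N x /\ u x <> 0] in
  [set connected_component A x | x in A].

Definition has_m_nodal_sets (R : realType) (N : nat) (m : nat)
  (u : 'rV[R]_N -> R) : Prop :=
  exists f : 'I_m -> set 'rV[R]_N, injective f /\ range f = nodal_sets u.

Definition alpha_p (R : realType) (N : nat) (p : R) : R :=
  Num.max 0 ((p * (N%:R - 2) - (N%:R + 2)) / 2).

Definition sup_norm (R : realType) (N : nat) (u : 'rV[R]_N -> R) : R :=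
  sup [set `|u x| | x in ballN R N].

From HB Require Import structures.
From mathcomp Require Import all_boot all_order all_algebra.
From mathcomp Require Import all_classical all_reals all_analysis.
From mathcomp Require Import ring lra.
Import Order.TTheory GRing.Theory Num.Theory.
Import numFieldNormedType.Exports.
Local Open Scope classical_set_scope.
Local Open Scope ring_scope.
Set Implicit Arguments. Unset Strict Implicit.
Unset Printing Implicit Defensive.

(* With k := floor(alpha/2) and M := ||u||_oo, the equation gives
   |Delta u(x)| <= M^p |x|^(2k) in the ball, since |x|^alpha <= |x|^(2k) there.
   The barrier (M^p / K) (1 - |x|^(2k+2)), where K := (k+1)(4k+2N), has
   Laplacian -M^p |x|^(2k) and vanishes on the sphere, so the maximum principle
   applied to u and -u gives M <= M^p / K, i.e. K <= M^(p-1).  Since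
   ((alpha+N)/N)^2 <= (2k+2)(2k+N) = K, the bound holds with C = 1.  The maximum
   principle itself is the one-dimensional second-derivative test along the
   coordinate lines, with the barrier perturbed by eps |x|^2 so that an
   interior maximum becomes impossible. *)

Section SquaredNorm.
Variables (R : realType) (N : nat).
Implicit Types (x : 'rV[R]_N) (i : 'I_N) (t : R).

Definition sqnorm x : R := \sum_i x ord0 i ^+ 2.

Lemma sqnorm_ge0 x : 0 <= sqnorm x.
Proof. by apply: sumr_ge0 => i _; exact: sqr_ge0. Qed.

Lemma sqr_coord_le_sqnorm x i : x ord0 i ^+ 2 <= sqnorm x.
Proof. by rewrite /sqnorm (bigD1 i) //= lerDl sumr_ge0 // => j _; exact: sqr_ge0. Qed.

Lemma sqnorm0 : sqnorm 0 = 0.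
Proof. by rewrite /sqnorm big1 // => i _; rewrite mxE expr0n. Qed.

Lemma enormE x : enorm x = Num.sqrt (sqnorm x).
Proof. by []. Qed.

Lemma sqr_enorm x : enorm x ^+ 2 = sqnorm x.
Proof. exact/sqr_sqrtr/sqnorm_ge0. Qed.

Lemma enorm_lt1 x : (enorm x < 1) = (sqnorm x < 1).
Proof. by rewrite -{1}sqrtr1 ltr_sqrt. Qed.

Lemma enorm_le1 x : (enorm x <= 1) = (sqnorm x <= 1).
Proof. by rewrite -{1}sqrtr1 ler_sqrt. Qed.

Lemma ballN0 : ballN R N 0.
Proof. by rewrite /ballN /= enorm_lt1 sqnorm0. Qed.

Lemma ballN_sub_cballN : ballN R N `<=` cballN R N.
Proof. by move=> x /ltW. Qed.

Lemma sqnorm_evec_line x i t :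
  sqnorm (t *: evec i + x) = sqnorm x + 2 * t * x ord0 i + t ^+ 2.
Proof.
have coord j : (t *: evec i + x) ord0 j = t * (j == i)%:R + x ord0 j.
  by rewrite !mxE eqxx.
rewrite /sqnorm (bigD1 i) //= [in RHS](bigD1 i) //= coord eqxx mulr1.
rewrite (eq_bigr (fun j => x ord0 j ^+ 2)) => [|j /negbTE ji]; last first.
  by rewrite coord ji mulr0 add0r.
rewrite sqrrD; lra.
Qed.

Lemma ballN_evec_line x i t :
  sqnorm x < 1 -> `|t| < (1 - sqnorm x) / 3 -> ballN R N (t *: evec i + x).
Proof.
move=> x1 ht; rewrite /ballN /= enorm_lt1 sqnorm_evec_line.
have xi1 : `|x ord0 i| <= 1.
  rewrite -(expr_le1 (ltn0Sn 1)) // real_normK ?num_real //.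
  exact/ltW/(le_lt_trans (sqr_coord_le_sqnorm x i)).
have lin : 2 * t * x ord0 i <= 2 * `|t|.
  apply: le_trans (ler_norm _) _; rewrite !normrM ger0_norm //.
  by rewrite -mulrA ler_wpM2l // ler_piMr.
have quad : t ^+ 2 <= `|t|.
  rewrite -real_normK ?num_real // expr2 ler_piMr //.
  apply/ltW/(lt_le_trans ht); have := sqnorm_ge0 x; lra.
lra.
Qed.

Lemma continuous_sqnorm : continuous sqnorm.
Proof.
move=> z; rewrite /sqnorm.
have -> : (fun v : 'rV[R]_N => \sum_i v ord0 i ^+ 2) =
          \sum_i (fun v : 'rV[R]_N => v ord0 i ^+ 2).
  by apply/funext => v; rewrite fct_sumE.
elim/big_ind: _ => [|f g cf cg|i _]; first exact: cst_continuous.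
  exact: continuousD.
by apply: continuousM; exact: coord_continuous.
Qed.

Lemma compact_cballN : compact (cballN R N).
Proof.
have -> : cballN R N = [set x | sqnorm x <= 1].
  by apply/seteqP; split => x; rewrite /cballN /= enorm_le1.
have cube := @rV_compact R N (fun=> `[-1, 1]%classic) (fun=> @segment_compact R (-1) 1).
apply: (subclosed_compact _ cube).
  apply: (@preimage_closed _ _ sqnorm [set r : R | r <= 1]) => [x _|].
    exact: continuous_sqnorm.
  exact: closed_le.
move=> x /= x1 i; rewrite /= in_itv /= -ler_norml.
rewrite -(expr_le1 (ltn0Sn 1)) // real_normK ?num_real //.
exact: le_trans (sqr_coord_le_sqnorm x i) x1.
Qed.

Lemma EVT_max_cballN (f : 'rV[R]_N -> R) :
  {within cballN R N, continuous f} ->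
  exists2 c, cballN R N c & forall y, cballN R N y -> f y <= f c.
Proof.
move=> fcont; have cB_ne : cballN R N !=set0 by exists 0; exact/ballN_sub_cballN/ballN0.
have [c /[!inE] cB cmax] := EVT_max_rV cB_ne compact_cballN fcont.
by exists c => // y yB; exact/cmax/mem_set.
Qed.

End SquaredNorm.

Lemma is_derive_along (R : realType) (V : normedModType R) (g : V -> R)
    (x v : V) (t : R) :
  derivable g (t *: v + x) v ->
  is_derive t 1 (fun s => g (s *: v + x)) ('D_v g (t *: v + x)).
Proof.
have quotE : (fun h : R => h^-1 *: (((fun s => g (s *: v + x)) \o shift t) (h *: 1)
                - g (t *: v + x))) =
             (fun h : R => h^-1 *: ((g \o shift (t *: v + x)) (h *: v) - g (t *: v + x))).
  by apply/funext => h /=; rewrite scalerDl addrA [h *: 1]mulr1.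
by move=> dg; split; rewrite /derivable /derive quotE.
Qed.

Lemma is_derive_gt0_right (R : realType) (f : R -> R) (D : R) :
  is_derive (0 : R) 1 f D -> f 0 = 0 -> 0 < D ->
  exists2 e : R, 0 < e & forall c, 0 < c < e -> 0 < f c.
Proof.
move=> [df <-] f0 Dpos.
have := cvgr_gt _ df 0 Dpos.
rewrite near_withinE => /(_ (dnbhs_filter 0)) /nbhs_ballP [e /= e0 He].
exists e => // c /andP[c0 ce].
have := He c; rewrite /ball /= sub0r normrN ger0_norm ?(ltW c0) //.
move=> /(_ ce) /(_ (lt0r_neq0 c0)).
by rewrite f0 subr0 [c%:A]mulr1 addr0 pmulr_rgt0 // invr_gt0.
Qed.

Lemma deriv2_le0_at_local_max (R : realType) (f df : R -> R) (d D : R) :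
  0 < d ->
  (forall t : R, `|t| < d -> f t <= f 0) ->
  (forall t : R, `|t| < d -> is_derive t 1 f (df t)) ->
  is_derive (0 : R) 1 df D -> D <= 0.
Proof.
move=> d0 fmax fder dfD.
have inI (t : R) : t \in `](- d), d[ -> `|t| < d by rewrite in_itv ltr_norml.
have df0 : df 0 = 0.
  have f'0 : is_derive (0 : R) 1 f 0.
    apply: (@derive1_at_max _ f (- d) d 0); first lra.
    - by move=> t /inI /fder [].
    - by rewrite in_itv /=; apply/andP; split; lra.
    - by move=> t /inI /fmax.
  by have [_ <-] := fder 0 (ltac:(by rewrite normr0)); rewrite derive_val.
(* If D > 0 then df > 0 just right of 0, so f increases there by the MVT. *)
rewrite leNgt; apply/negP => /(is_derive_gt0_right dfD df0) [e e0 dfpos].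
pose t := Num.min e d / 2.
have t0 : 0 < t by rewrite /t divr_gt0 // lt_min e0 d0.
have /andP[me md] : (Num.min e d <= e) && (Num.min e d <= d) by rewrite -le_min.
have [te td] : t < e /\ t < d by rewrite /t; split; lra.
have [c /[!in_itv]/= /andP[c0 ct] fdiff] : exists2 c, c \in `]0, t[ & f t - f 0 = df c * (t - 0).
  have fderI z : 0 <= z <= t -> is_derive z 1 f (df z).
    by move=> /andP[z0 zt]; apply: fder; rewrite ger0_norm; lra.
  apply: MVT => [//|z /[!in_itv]/= /andP[z0 zt]|].
    by apply: fderI; rewrite !ltW.
  by apply: derivable_within_continuous => z /[!in_itv]/= /fderI [].
have : 0 < df c * t by rewrite mulr_gt0 // dfpos // c0 (lt_trans ct te).
have := fmax t (ltac:(rewrite ger0_norm; lra)).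
rewrite subr0 in fdiff; lra.
Qed.

Section RadialPolynomials.
Variables (R : realType) (N : nat).
Implicit Types (x : 'rV[R]_N) (i : 'I_N) (F : {poly R}).

Definition sqnorm_line_poly x i : {poly R} :=
  (sqnorm x)%:P + (2 * x ord0 i) *: 'X + 'X^2.

Lemma horner_sqnorm_line_poly x i t :
  (sqnorm_line_poly x i).[t] = sqnorm (t *: evec i + x).
Proof. by rewrite sqnorm_evec_line /sqnorm_line_poly !hornerE; ring. Qed.

Lemma deriv2_comp_sqnorm_line_poly F x i :
  (F \Po sqnorm_line_poly x i)^`()^`().[0] =
  F^`()^`().[sqnorm x] * (2 * x ord0 i) ^+ 2 + F^`().[sqnorm x] * 2.
Proof.
set q := sqnorm_line_poly x i.
have dq : q^`() = (2 * x ord0 i)%:P + 'X *+ 2.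
  by rewrite /q !derivD derivC derivZ derivX derivXn add0r alg_polyC expr1.
have q0 : q.[0] = sqnorm x by rewrite horner_sqnorm_line_poly scale0r add0r.
rewrite !deriv_comp derivM deriv_comp.
rewrite dq derivD derivC derivMn derivX add0r.
rewrite !(hornerD, hornerM) !horner_comp q0 !(hornerD, hornerMn, hornerC, hornerX).
ring.
Qed.

Lemma sum_deriv2_comp_sqnorm_line_poly F x :
  \sum_i (F \Po sqnorm_line_poly x i)^`()^`().[0] =
  4 * sqnorm x * F^`()^`().[sqnorm x] + 2 * N%:R * F^`().[sqnorm x].
Proof.
under eq_bigr do rewrite deriv2_comp_sqnorm_line_poly exprMn.
rewrite big_split /= -!mulr_sumr sumr_const card_ord -/(sqnorm x) -mulr_natr.
ring.
Qed.

(* [lap_sqnorm_pow_const k * |x|^(2k)] is the Laplacian of [|x|^(2k+2)] in R^N. *)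
Definition lap_sqnorm_pow_const (k : nat) : R := k.+1%:R * (4 * k%:R + 2 * N%:R).

Lemma lap_sqnorm_pow_const_gt0 k : (0 < N)%N -> 0 < lap_sqnorm_pow_const k.
Proof.
by move=> N0; rewrite mulr_gt0 ?ltr0n // ltr_wpDl ?mulr_ge0 // mulr_gt0 ?ltr0n.
Qed.

Definition barrier_poly (cc eps : R) (k : nat) : {poly R} :=
  cc *: 'X^(k.+1) + eps *: 'X.

Lemma horner_barrier_poly cc eps k s :
  (barrier_poly cc eps k).[s] = cc * s ^+ k.+1 + eps * s.
Proof. by rewrite hornerD !hornerZ hornerXn hornerX. Qed.

Lemma barrier_poly_laplacian cc eps k s :
  4 * s * (barrier_poly cc eps k)^`()^`().[s] +
    2 * N%:R * (barrier_poly cc eps k)^`().[s] =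
  cc * lap_sqnorm_pow_const k * s ^+ k + 2 * N%:R * eps.
Proof.
rewrite /barrier_poly !(derivD, derivZ, derivXn, derivMn, derivX) /=.
rewrite -polyC1 derivC !(hornerD, hornerZ, hornerMn, hornerXn, horner0, hornerC).
rewrite mulr0 addr0 mulr1 -[s ^+ k.-1 *+ k]mulr_natr.
rewrite -[(_ * k%:R) *+ k.+1]mulr_natr -[s ^+ k *+ k.+1]mulr_natr.
have sXk : s * (s ^+ k.-1 * k%:R) = s ^+ k * k%:R.
  by case: k => [|k]; rewrite ?mulr0 // mulrA -exprS.
transitivity (4 * cc * k.+1%:R * (s * (s ^+ k.-1 * k%:R)) +
              2 * N%:R * (cc * (s ^+ k * k.+1%:R) + eps)); first by ring.
by rewrite sXk /lap_sqnorm_pow_const; ring.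
Qed.

End RadialPolynomials.

Arguments lap_sqnorm_pow_const {R}.

Section MaximumPrinciple.
Variables (R : realType) (N : nat) (u : 'rV[R]_N -> R).
Hypothesis du : forall y, ballN R N y -> forall i : 'I_N,
  derivable u y (evec i) /\ derivable (pd i u) y (evec i).

Lemma deriv2_line_le0_at_max (lam : R) (F : {poly R}) x i :
  sqnorm x < 1 ->
  (forall y, cballN R N y ->
     lam * u y + F.[sqnorm y] <= lam * u x + F.[sqnorm x]) ->
  lam * pd i (pd i u) x + (F \Po sqnorm_line_poly x i)^`()^`().[0] <= 0.
Proof.
move=> x1 xmax; set q := sqnorm_line_poly x i.
have xB : ballN R N x by rewrite /ballN /= enorm_lt1.
have line0 : 0 *: evec i + x = x by rewrite scale0r add0r.
have Fq t : (F \Po q).[t] = F.[sqnorm (t *: evec i + x)].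
  by rewrite horner_comp horner_sqnorm_line_poly.
apply: (@deriv2_le0_at_local_max _
  (fun t => lam * u (t *: evec i + x) + (F \Po q).[t])
  (fun t => lam * pd i u (t *: evec i + x) + (F \Po q)^`().[t])
  ((1 - sqnorm x) / 3)).
- by rewrite divr_gt0 // subr_gt0.
- move=> t /(ballN_evec_line i x1) tB; rewrite !Fq line0.
  exact/xmax/ballN_sub_cballN.
- move=> t /(ballN_evec_line i x1) /du /(_ i) [dut _].
  exact: is_deriveD (is_deriveZ lam (is_derive_along dut)) (is_derive_poly _ t).
- have [_] := du xB i; rewrite -{1}line0 => /is_derive_along/(is_deriveZ lam) d2u.
  by have := is_deriveD d2u (is_derive_poly (F \Po q)^`() 0); rewrite line0.
Qed.

Lemma laplacian_le_at_max (lam : R) (F : {poly R}) x :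
  sqnorm x < 1 ->
  (forall y, cballN R N y ->
     lam * u y + F.[sqnorm y] <= lam * u x + F.[sqnorm x]) ->
  lam * laplacian u x + (4 * sqnorm x * F^`()^`().[sqnorm x] +
    2 * N%:R * F^`().[sqnorm x]) <= 0.
Proof.
move=> x1 xmax; rewrite -sum_deriv2_comp_sqnorm_line_poly mulr_sumr -big_split /=.
by apply: sumr_le0 => i _; exact: deriv2_line_le0_at_max.
Qed.

Hypothesis u_cont : {within cballN R N, continuous u}.
Hypothesis u_sphere : forall y, enorm y = 1 -> u y = 0.

Lemma le_barrier_of_laplacian_bound (lam Q : R) (k : nat) : (0 < N)%N ->
  (forall x, ballN R N x -> - (lam * laplacian u x) <= Q * sqnorm x ^+ k) ->
  forall y, ballN R N y ->
  lam * u y <= Q / lap_sqnorm_pow_const N k * (1 - sqnorm y ^+ k.+1).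
Proof.
move=> N0 lapQ y yB.
set K := lap_sqnorm_pow_const N k; set cc := Q / K.
have QK : cc * K = Q by rewrite divfK // lt0r_neq0 // lap_sqnorm_pow_const_gt0.
apply/ler_addgt0Pr => eps eps0; set P := barrier_poly cc eps k.
have Pcont : {within cballN R N, continuous (fun y => P.[sqnorm y])}.
  apply: continuous_subspaceT => z.
  by apply: continuous_comp; [exact: continuous_sqnorm | exact: continuous_horner].
have hcont : {within cballN R N, continuous (fun y => lam * u y + P.[sqnorm y])}.
  have -> : (fun y => lam * u y + P.[sqnorm y]) = lam \*: u + (fun y => P.[sqnorm y]).
    by [].
  by move=> z; apply: continuousD; [apply: continuousZl_tmp; exact: u_cont | exact: Pcont].
have [c cB cmax] := EVT_max_cballN hcont.
have c1 : sqnorm c = 1.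
  apply/eqP; rewrite eq_le -enorm_le1 cB leNgt; apply/negP => c1.
  have := laplacian_le_at_max c1 cmax.
  have := lapQ c (ltac:(by rewrite /ballN /= enorm_lt1)).
  rewrite barrier_poly_laplacian -/K QK.
  have : 0 < 2 * N%:R * eps by rewrite !mulr_gt0 ?ltr0n.
  lra.
have := cmax y (ballN_sub_cballN yB).
have uc : u c = 0 by apply: u_sphere; rewrite enormE c1 sqrtr1.
rewrite uc /P !horner_barrier_poly c1 expr1n.
have : 0 <= eps * sqnorm y by rewrite mulr_ge0 ?sqnorm_ge0 ?ltW.
lra.
Qed.

Lemma abs_le_of_laplacian_bound (Q : R) (k : nat) : (0 < N)%N -> 0 <= Q ->
  (forall x, ballN R N x -> `|laplacian u x| <= Q * sqnorm x ^+ k) ->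
  forall y, ballN R N y -> `|u y| <= Q / lap_sqnorm_pow_const N k.
Proof.
move=> N0 Q0 lapQ y yB.
have K0 : 0 < lap_sqnorm_pow_const N k :> R by exact: lap_sqnorm_pow_const_gt0.
have barrier_le1 : Q / lap_sqnorm_pow_const N k * (1 - sqnorm y ^+ k.+1)
    <= Q / lap_sqnorm_pow_const N k.
  by rewrite ler_piMr ?gerBl ?exprn_ge0 ?sqnorm_ge0 // divr_ge0 // ltW.
have signed (lam : R) : `|lam| = 1 ->
    lam * u y <= Q / lap_sqnorm_pow_const N k.
  move=> lam1; apply: le_trans barrier_le1.
  apply: le_barrier_of_laplacian_bound => // x xB.
  by rewrite -mulrN (le_trans (ler_norm _)) // normrM lam1 mul1r normrN lapQ.
rewrite ler_norml lerNl; apply/andP; split;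
  by [rewrite -mulN1r signed ?normrN ?normr1 | rewrite -[u y]mul1r signed ?normr1].
Qed.

End MaximumPrinciple.

Lemma powR_le_expr (R : realType) (r a : R) (n : nat) :
  0 <= r <= 1 -> 0 < a -> n%:R <= a -> r `^ a <= r ^+ n.
Proof.
move=> /andP[r0 r1] a0 na; rewrite -powR_mulrn //.
have [->|rpos] := eqVneq r 0; first by rewrite powR0 ?gt_eqF ?powR_ge0.
by apply: ger_powR; rewrite // lt_def rpos r0.
Qed.

Lemma powR_le_of_sqr_le (R : realType) (a M p : R) :
  0 <= a -> 0 <= M -> 1 < p -> a ^+ 2 <= M `^ (p - 1) -> a `^ (2 / (p - 1)) <= M.
Proof.
move=> a0 M0 p1 aM.
have p1_gt0 : 0 < p - 1 by rewrite subr_gt0.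
have ip0 : 0 <= (p - 1)^-1 by rewrite invr_ge0 ltW.
have -> : M = (M `^ (p - 1)) `^ (p - 1)^-1.
  by rewrite -powRrM mulfV ?powRr1 // lt0r_neq0.
rewrite powRrM; apply: ge0_ler_powR; rewrite ?nnegrE ?powR_ge0 //.
by rewrite powR_mulrn.
Qed.

Lemma sqr_scaled_dim_le (R : realType) (N k : nat) (alpha : R) :
  (2 <= N)%N -> 0 <= alpha -> alpha < 2 * k.+1%:R ->
  ((alpha + N%:R) / N%:R) ^+ 2 <= lap_sqnorm_pow_const N k.
Proof.
move=> N2 a0 ak; have NR : 2 <= N%:R :> R by rewrite (ler_nat R 2 N).
have kR : 0 <= k%:R :> R by [].
have s0 : 0 <= (alpha + N%:R) / N%:R by rewrite divr_ge0 ?addr_ge0.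
have s1 : (alpha + N%:R) / N%:R <= 2 * k%:R + 2.
  by rewrite ler_pdivrMr ?(lt_le_trans _ NR) //; move: ak; rewrite -natr1; nra.
have s2 : (alpha + N%:R) / N%:R <= 2 * k%:R + N%:R.
  by rewrite ler_pdivrMr ?(lt_le_trans _ NR) //; move: ak; rewrite -natr1; nra.
have -> : lap_sqnorm_pow_const N k = (2 * k%:R + 2) * (2 * k%:R + N%:R) :> R.
  by rewrite /lap_sqnorm_pow_const -natr1; ring.
by rewrite expr2 ler_pM.
Qed.

Section HenonEquation.
Variables (R : realType) (N : nat).

Lemma sup_norm_ub (u : 'rV[R]_N -> R) :
  {within cballN R N, continuous u} -> forall y, ballN R N y -> `|u y| <= sup_norm u.
Proof.
move=> ucont y yB.
have abs_cont : {within cballN R N, continuous (fun y => `|u y|)}.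
  by move=> z; apply: continuous_comp; [exact: ucont | exact: norm_continuous].
have [c _ cmax] := EVT_max_cballN abs_cont.
apply: ub_le_sup; last by exists y.
by exists `|u c| => _ [z zB <-]; exact/cmax/ballN_sub_cballN.
Qed.

Lemma sup_norm_le (u : 'rV[R]_N -> R) (c : R) :
  (forall y, ballN R N y -> `|u y| <= c) -> sup_norm u <= c.
Proof.
move=> uc; apply: ge_sup; first by exists `|u 0|, 0; first exact: ballN0.
by move=> _ [y yB <-]; exact: uc.
Qed.

Lemma henon_laplacian_bound (u : 'rV[R]_N -> R) (p alpha M : R) (k : nat) x :
  1 < p -> 0 < alpha -> (2 * k)%:R <= alpha -> ballN R N x -> `|u x| <= M ->
  - laplacian u x = enorm x `^ alpha * `|u x| `^ (p - 1) * u x ->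
  `|laplacian u x| <= M `^ (p - 1) * M * sqnorm x ^+ k.
Proof.
move=> p1 a0 ka xB uM upde.
have M0 : 0 <= M := le_trans (normr_ge0 _) uM.
have xpow : enorm x `^ alpha <= sqnorm x ^+ k.
  rewrite -sqr_enorm -exprM; apply: powR_le_expr => //.
  by rewrite sqrtr_ge0 ltW.
have upow : `|u x| `^ (p - 1) <= M `^ (p - 1).
  by apply: ge0_ler_powR; rewrite ?nnegrE // subr_ge0 ltW.
rewrite -normrN upde !normrM !(ger0_norm (powR_ge0 _ _)) [leRHS]mulrC mulrA.
by apply: ler_pM; rewrite ?mulr_ge0 ?powR_ge0 // ler_pM ?powR_ge0.
Qed.

End HenonEquation.

Theorem lemma3p1 (R : realType) (N : nat) (p : R) (m : nat) :
  (3 <= N)%N -> 1 < p ->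
  exists C : R, 0 < C /\
    forall (alpha : R) (u : 'rV[R]_N -> R),
      alpha_p N p < alpha ->
      henon_dirichlet_sol p alpha u ->
      radial u ->
      has_m_nodal_sets m u ->
      0 < u 0 ->
      C * ((alpha + N%:R) / N%:R) `^ (2 / (p - 1)) <= sup_norm u.
Proof.
move=> N3 p1; have N0 : (0 < N)%N by apply: leq_trans N3.
exists 1; split => // alpha u alpha_gt [[ucont uC2] [upde usphere]] _ _ u0.
have alpha0 : 0 < alpha by apply: le_lt_trans alpha_gt; rewrite le_max lexx.
have du y : ballN R N y -> forall i, derivable u y (evec i) /\ derivable (pd i u) y (evec i).
  by move=> yB i; have [? [? _]] := uC2 y yB i i.
set M := sup_norm u; have uM := sup_norm_ub ucont.
have M0 : 0 < M by apply: lt_le_trans u0 (le_trans (ler_norm _) (uM 0 (ballN0 R N))).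
set k := Num.truncn (alpha / 2).
have /andP[k_le k_gt] : k%:R <= alpha / 2 < k.+1%:R by apply: truncn_itv; lra.
have k2 : (2 * k)%:R <= alpha by rewrite natrM; lra.
have lapM x : ballN R N x -> `|laplacian u x| <= M `^ (p - 1) * M * sqnorm x ^+ k.
  by move=> xB; apply: henon_laplacian_bound p1 alpha0 k2 xB (uM x xB) (upde x xB).
have MK : M <= M `^ (p - 1) * M / lap_sqnorm_pow_const N k.
  apply: sup_norm_le; apply: abs_le_of_laplacian_bound lapM => //.
  by rewrite mulr_ge0 ?powR_ge0 ?ltW.
have alpha_k : alpha < 2 * k.+1%:R by lra.
have KM : lap_sqnorm_pow_const N k <= M `^ (p - 1).
  by rewrite -(ler_pM2r M0) mulrC -ler_pdivlMr ?lap_sqnorm_pow_const_gt0.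
rewrite mul1r; apply: (powR_le_of_sqr_le _ (ltW M0) p1).
  by rewrite divr_ge0 // addr_ge0 // ltW.
apply: le_trans KM; apply: sqr_scaled_dim_le alpha_k; last exact: ltW.
exact: leq_trans N3.
Qed.
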